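(* If $r\ge\sqrt{\frac{c\ln n}{n}}$ with a constant $c\ge 36$, then w.h.p. $G(n,r)$ is not plane.
   Context: The random geometric graph $G(n,r)$ is formed by choosing $n$ points independently and uniformly at random in the unit square $[0,1]^2$; two points are joined by a straight-line edge iff their Euclidean distance is at most $r$, where $r=r(n)$ is a function of $n$. Two line segments cross if they have a common point that is interior to both. A geometric graph is plane if no two of its edges cross. ''W.h.p.'' means with probability tending to $1$ as $n\to\infty$. *)

From Stdlib Require Import Reals Lra.
Open Scope R_scope.

Definition point := (R * R)%type.

Definition dist (p q : point) : R :=
  sqrt ((fst p - fst q)^2 + (snd p - snd q)^2).

Definition seg_interior (p q z : point) : Prop :=
  exists t : R, 0 < t < 1 /\
    z = (fst p + t * (fst q - fst p), snd p + t * (snd q - snd p)).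

Definition segs_cross (p q p' q' : point) : Prop :=
  exists z : point, seg_interior p q z /\ seg_interior p' q' z.

(** A configuration of n points: X i for i < n (other values irrelevant). *)
Definition config := nat -> point.

Definition rg_edge (n : nat) (r : R) (X : config) (i j : nat) : Prop :=
  (i < n)%nat /\ (j < n)%nat /\ i <> j /\ dist (X i) (X j) <= r.

Definition rg_plane (n : nat) (r : R) (X : config) : Prop :=
  forall i j k l : nat,
    rg_edge n r X i j -> rg_edge n r X k l ->
    ~ ((i = k /\ j = l) \/ (i = l /\ j = k)) ->
    ~ segs_cross (X i) (X j) (X k) (X l).

Definition in_unit_square (n : nat) (X : config) : Prop :=
  forall i : nat, (i < n)%nat ->
    0 <= fst (X i) <= 1 /\ 0 <= snd (X i) <= 1.

(** Lebesgue (outer) measure on R^(2n) = (R^2)^n, via countable covers by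
    closed boxes.  A box is given by corners lo, hi : config. *)
Definition in_box (n : nat) (lo hi : config) (X : config) : Prop :=
  forall i : nat, (i < n)%nat ->
    fst (lo i) <= fst (X i) <= fst (hi i) /\
    snd (lo i) <= snd (X i) <= snd (hi i).

Fixpoint box_vol (n : nat) (lo hi : config) : R :=
  match n with
  | O => 1
  | S m => box_vol m lo hi *
           ((fst (hi m) - fst (lo m)) * (snd (hi m) - snd (lo m)))
  end.

Definition box_ok (n : nat) (lo hi : config) : Prop :=
  forall i : nat, (i < n)%nat -> fst (lo i) <= fst (hi i) /\ snd (lo i) <= snd (hi i).

Definition outer_measure_lt (n : nat) (E : config -> Prop) (eps : R) : Prop :=
  exists (lo hi : nat -> config) (l : R),
    (forall k, box_ok n (lo k) (hi k)) /\
    (forall X, E X -> exists k, in_box n (lo k) (hi k) X) /\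
    infinite_sum (fun k => box_vol n (lo k) (hi k)) l /\ l < eps.

(** Event that G(n,r) (points X_0..X_{n-1} i.i.d. uniform in [0,1]^2) is plane;
    its probability is the Lebesgue measure of this subset of [0,1]^(2n). *)
Definition plane_event (n : nat) (r : R) : config -> Prop :=
  fun X => in_unit_square n X /\ rg_plane n r X.

From Pilot Require Import Defs.
From Stdlib Require Import Reals Lra Lia List Classical FunctionalExtensionality.
Import ListNotations.
Open Scope R_scope.

(* Let h = min(r, 1) / 10 and cut [0, 7h]^2 into a 7 x 7 grid of cells. If
   the middle cells of its four sides all contain sample points, these points
   are within distance 7 sqrt 2 h <= r of each other and the west-east edge
   crosses the south-north edge. So a plane G(n, r) leaves one of these four
   cells of area h^2 empty, which has probability (1 - h^2)^n <= exp(-n h^2);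
   and n h^2 >= min(c ln n, n) / 100 tends to infinity. The event that a cell
   is empty is covered by products of the four rectangles tiling its
   complement in the unit square. *)

Definition Rsum_list (L : list R) : R := fold_right Rplus 0 L.

Lemma Rsum_list_app (L1 L2 : list R) :
  Rsum_list (L1 ++ L2) = Rsum_list L1 + Rsum_list L2.
Proof. induction L1 as [|a L1 IH]; simpl; [lra | rewrite IH; lra]. Qed.

Lemma sum_f_R0_nth (L : list R) (n : nat) :
  (length L <= S n)%nat -> sum_f_R0 (fun k => nth k L 0) n = Rsum_list L.
Proof.
  revert n; induction L as [|a L IH]; intros n Hn.
  - induction n as [|n IHn]; simpl in *; [reflexivity | rewrite IHn by lia; lra].
  - simpl in Hn. destruct n as [|n].
    + destruct L; simpl in *; [lra | lia].
    + rewrite decomp_sum by lia. simpl. rewrite <- IH with n by lia. reflexivity.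
Qed.

Lemma infinite_sum_nth (L : list R) : infinite_sum (fun k => nth k L 0) (Rsum_list L).
Proof.
  intros eps Heps. exists (length L). intros n Hn.
  rewrite sum_f_R0_nth by lia. unfold Rdist. rewrite Rminus_diag, Rabs_R0. exact Heps.
Qed.

Definition rect := (point * point)%type.

Definition in_rect (b : rect) (x : point) : Prop :=
  fst (fst b) <= fst x <= fst (snd b) /\ snd (fst b) <= snd x <= snd (snd b).

Definition rect_ok (b : rect) : Prop :=
  fst (fst b) <= fst (snd b) /\ snd (fst b) <= snd (snd b).

Definition rect_area (b : rect) : R :=
  (fst (snd b) - fst (fst b)) * (snd (snd b) - snd (fst b)).

Definition cbox := (config * config)%type.

Definition cbox_vol (n : nat) (B : cbox) : R := box_vol n (fst B) (snd B).

Definition cbox0 : cbox := (fun _ => (0, 0), fun _ => (0, 0)).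

Lemma outer_measure_lt_finite_cover (n : nat) (E : config -> Prop)
    (L : list cbox) (eps : R) :
  (1 <= n)%nat ->
  (forall B, In B L -> box_ok n (fst B) (snd B)) ->
  (forall X, E X -> exists B, In B L /\ in_box n (fst B) (snd B) X) ->
  Rsum_list (map (cbox_vol n) L) < eps ->
  outer_measure_lt n E eps.
Proof.
  intros Hn Hok Hcov Hsum.
  (* the cover is padded with the degenerate box [cbox0], of volume 0 as n >= 1 *)
  assert (Hvol0 : cbox_vol n cbox0 = 0).
  { destruct n as [|m]; [lia |]. unfold cbox_vol; simpl. ring. }
  exists (fun k => fst (nth k L cbox0)), (fun k => snd (nth k L cbox0)),
    (Rsum_list (map (cbox_vol n) L)).
  split; [| split; [| split]]; [| | | exact Hsum].
  - intro k. destruct (Nat.lt_ge_cases k (length L)) as [Hk | Hk].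
    + apply Hok, nth_In, Hk.
    + rewrite nth_overflow by lia. intros i _; simpl; lra.
  - intros X HX. destruct (Hcov X HX) as [B [HB HXB]].
    destruct (In_nth L B cbox0 HB) as [k [_ Hk]]. exists k. rewrite Hk. exact HXB.
  - replace (fun k => box_vol n (fst (nth k L cbox0)) (snd (nth k L cbox0)))
      with (fun k => nth k (map (cbox_vol n) L) 0).
    + apply infinite_sum_nth.
    + extensionality k. rewrite <- Hvol0, map_nth. reflexivity.
Qed.

Definition cbox_set (m : nat) (b : rect) (B : cbox) : cbox :=
  (fun i => if Nat.eq_dec i m then fst b else fst B i,
   fun i => if Nat.eq_dec i m then snd b else snd B i).

Fixpoint product_boxes (Bs : list rect) (n : nat) : list cbox :=
  match n with
  | O => [cbox0]
  | S m => flat_map (fun b => map (cbox_set m b) (product_boxes Bs m)) Bs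
  end.

Lemma box_vol_ext (n : nat) (lo hi lo' hi' : config) :
  (forall i, (i < n)%nat -> lo i = lo' i /\ hi i = hi' i) ->
  box_vol n lo hi = box_vol n lo' hi'.
Proof.
  revert lo hi lo' hi'; induction n as [|n IH]; intros lo hi lo' hi' H; simpl; [reflexivity |].
  rewrite (IH lo hi lo' hi') by (intros; apply H; lia).
  destruct (H n) as [-> ->]; [lia | reflexivity].
Qed.

Lemma cbox_vol_set (m : nat) (b : rect) (B : cbox) :
  cbox_vol (S m) (cbox_set m b B) = cbox_vol m B * rect_area b.
Proof.
  unfold cbox_vol, cbox_set; simpl. destruct (Nat.eq_dec m m) as [_ | ]; [| congruence].
  f_equal. apply box_vol_ext. intros i Hi.
  destruct (Nat.eq_dec i m); [lia | auto].
Qed.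

Lemma cbox_vol_flat_set (m : nat) (L : list cbox) (Bs : list rect) :
  Rsum_list (map (cbox_vol (S m)) (flat_map (fun b => map (cbox_set m b) L) Bs))
  = Rsum_list (map (cbox_vol m) L) * Rsum_list (map rect_area Bs).
Proof.
  induction Bs as [|b Bs IH]; simpl; [ring |].
  rewrite map_app, Rsum_list_app, IH, map_map.
  enough (Rsum_list (map (fun B => cbox_vol (S m) (cbox_set m b B)) L)
          = Rsum_list (map (cbox_vol m) L) * rect_area b) as -> by ring.
  clear IH. induction L as [|B L IHL]; simpl; [ring |].
  rewrite cbox_vol_set, IHL. ring.
Qed.

Lemma product_boxes_vol (Bs : list rect) (n : nat) :
  Rsum_list (map (cbox_vol n) (product_boxes Bs n)) = Rsum_list (map rect_area Bs) ^ n.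
Proof.
  induction n as [|m IH]; simpl.
  - unfold cbox_vol; simpl; ring.
  - rewrite cbox_vol_flat_set, IH. ring.
Qed.

Lemma product_boxes_ok (Bs : list rect) (n : nat) :
  (forall b, In b Bs -> rect_ok b) ->
  forall B, In B (product_boxes Bs n) -> box_ok n (fst B) (snd B).
Proof.
  intros HBs. induction n as [|m IH]; simpl; intros B HB i Hi; [lia |].
  apply in_flat_map in HB as [b [Hb HB]]. apply in_map_iff in HB as [B' [<- HB']].
  unfold cbox_set; simpl. destruct (Nat.eq_dec i m).
  - apply HBs, Hb.
  - apply (IH B' HB'). lia.
Qed.

Lemma product_boxes_cover (Bs : list rect) (n : nat) (X : config) :
  (forall i, (i < n)%nat -> exists b, In b Bs /\ in_rect b (X i)) ->
  exists B, In B (product_boxes Bs n) /\ in_box n (fst B) (snd B) X.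
Proof.
  induction n as [|m IH]; intros HX.
  - exists cbox0. split; [left; reflexivity | intros i Hi; lia].
  - destruct IH as [B [HB HXB]]; [intros i Hi; apply HX; lia |].
    destruct (HX m) as [b [Hb Hxb]]; [lia |].
    exists (cbox_set m b B). split.
    + apply in_flat_map. exists b. split; [exact Hb | apply in_map, HB].
    + intros i Hi. unfold cbox_set; simpl. destruct (Nat.eq_dec i m) as [-> | Him].
      * exact Hxb.
      * apply HXB. lia.
Qed.

Definition rect_in_unit_square (b : rect) : Prop :=
  0 <= fst (fst b) <= fst (snd b) /\ fst (snd b) <= 1 /\
  0 <= snd (fst b) <= snd (snd b) /\ snd (snd b) <= 1.

Definition rect_complement (b : rect) : list rect :=
  let '((x0, y0), (x1, y1)) := b in
  [((0, 0), (1, y0)); ((0, y1), (1, 1)); ((0, y0), (x0, y1)); ((x1, y0), (1, y1))].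

Lemma rect_complement_ok (b : rect) :
  rect_in_unit_square b -> forall b', In b' (rect_complement b) -> rect_ok b'.
Proof.
  destruct b as [[x0 y0] [x1 y1]]; unfold rect_in_unit_square, rect_ok; simpl.
  intros Hb b' Hb'. repeat (destruct Hb' as [<- | Hb']; [simpl; lra |]). destruct Hb'.
Qed.

Lemma rect_complement_area (b : rect) :
  Rsum_list (map rect_area (rect_complement b)) = 1 - rect_area b.
Proof. destruct b as [[x0 y0] [x1 y1]]; unfold rect_area; simpl. ring. Qed.

Lemma rect_complement_cover (b : rect) (x : point) :
  0 <= fst x <= 1 -> 0 <= snd x <= 1 -> ~ in_rect b x ->
  exists b', In b' (rect_complement b) /\ in_rect b' x.
Proof.
  destruct b as [[x0 y0] [x1 y1]], x as [u v]; unfold in_rect; simpl. intros Hu Hv Hx.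
  destruct (Rle_dec v y0); [exists ((0, 0), (1, y0)); simpl; split; [tauto | lra] |].
  destruct (Rle_dec y1 v); [exists ((0, y1), (1, 1)); simpl; split; [tauto | lra] |].
  destruct (Rle_dec u x0); [exists ((0, y0), (x0, y1)); simpl; split; [tauto | lra] |].
  destruct (Rle_dec x1 u); [exists ((x1, y0), (1, y1)); simpl; split; [tauto | lra] |].
  exfalso; apply Hx; lra.
Qed.

Lemma Rsum_list_flat_map {A : Type} (f : A -> list R) (L : list A) :
  Rsum_list (flat_map f L) = Rsum_list (map (fun a => Rsum_list (f a)) L).
Proof. induction L as [|a L IH]; simpl; [reflexivity | rewrite Rsum_list_app, IH; reflexivity]. Qed.

Lemma outer_measure_lt_some_rect_empty (n : nat) (Rs : list rect) (eps : R) :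
  (1 <= n)%nat ->
  (forall b, In b Rs -> rect_in_unit_square b) ->
  Rsum_list (map (fun b => (1 - rect_area b) ^ n) Rs) < eps ->
  outer_measure_lt n
    (fun X => in_unit_square n X /\
              exists b, In b Rs /\ forall i, (i < n)%nat -> ~ in_rect b (X i))
    eps.
Proof.
  intros Hn HRs Hsum.
  apply outer_measure_lt_finite_cover
    with (L := flat_map (fun b => product_boxes (rect_complement b) n) Rs); [exact Hn | | |].
  - intros B HB. apply in_flat_map in HB as [b [Hb HB]].
    exact (product_boxes_ok _ n (rect_complement_ok b (HRs b Hb)) B HB).
  - intros X [HX [b [Hb Hempty]]].
    destruct (product_boxes_cover (rect_complement b) n X) as [B [HB HXB]].
    + intros i Hi. destruct (HX i Hi). apply rect_complement_cover; auto.
    + exists B. split; [apply in_flat_map; exists b; auto | exact HXB].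
  - rewrite flat_map_concat_map, concat_map, <- flat_map_concat_map, Rsum_list_flat_map, map_map.
    erewrite map_ext; [exact Hsum |].
    intro b. rewrite product_boxes_vol, rect_complement_area. reflexivity.
Qed.

Definition square (x y h : R) : rect := ((x, y), (x + h, y + h)).

Lemma rect_area_square (x y h : R) : rect_area (square x y h) = h * h.
Proof. unfold rect_area, square; simpl. ring. Qed.

Definition west_cell (h : R) : rect := square 0 (3 * h) h.
Definition east_cell (h : R) : rect := square (6 * h) (3 * h) h.
Definition south_cell (h : R) : rect := square (3 * h) 0 h.
Definition north_cell (h : R) : rect := square (3 * h) (6 * h) h.

Definition side_cells (h : R) : list rect :=
  [west_cell h; east_cell h; south_cell h; north_cell h].

Lemma segs_cross_side_cells (h : R) (p q p' q' : point) :
  0 < h ->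
  in_rect (west_cell h) p -> in_rect (east_cell h) q ->
  in_rect (south_cell h) p' -> in_rect (north_cell h) q' ->
  segs_cross p q p' q'.
Proof.
  destruct p as [a b], q as [c d], p' as [a' b'], q' as [c' d'].
  unfold in_rect; simpl. intros Hh Hp Hq Hp' Hq'.
  (* Cramer's rule for p + t (q - p) = p' + u (q' - p'); D > 0 as the
     segments are nearly horizontal and nearly vertical respectively *)
  set (D := (c - a) * (d' - b') - (d - b) * (c' - a')).
  assert (HD : 0 < D) by (unfold D; nra).
  set (t := ((a' - a) * (d' - b') - (b' - b) * (c' - a')) / D).
  set (u := ((d - b) * (a' - a) - (c - a) * (b' - b)) / D).
  assert (Ht : 0 < t < 1).
  { unfold t; split.
    - apply Rdiv_lt_0_compat; [nra | exact HD].
    - apply Rmult_lt_reg_r with D; [exact HD |].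
      unfold Rdiv; rewrite Rmult_assoc, Rinv_l by lra. unfold D; nra. }
  assert (Hu : 0 < u < 1).
  { unfold u; split.
    - apply Rdiv_lt_0_compat; [nra | exact HD].
    - apply Rmult_lt_reg_r with D; [exact HD |].
      unfold Rdiv; rewrite Rmult_assoc, Rinv_l by lra. unfold D; nra. }
  exists (a + t * (c - a), b + t * (d - b)). split.
  - exists t. split; [exact Ht | reflexivity].
  - exists u. split; [exact Hu |]. simpl.
    unfold t, u, D in *. f_equal; field; lra.
Qed.

Lemma dist_le_in_square (h r : R) (p q : point) :
  0 <= r -> 98 * (h * h) <= r * r ->
  in_rect (square 0 0 (7 * h)) p -> in_rect (square 0 0 (7 * h)) q ->
  Defs.dist p q <= r.
Proof.
  unfold in_rect, Defs.dist; simpl. intros Hr Hhr Hp Hq.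
  rewrite <- (sqrt_pow2 r) by exact Hr. apply sqrt_le_1_alt. nra.
Qed.

Lemma side_cells_in_square (h : R) (b : rect) (x : point) :
  0 < h -> In b (side_cells h) -> in_rect b x -> in_rect (square 0 0 (7 * h)) x.
Proof.
  intros Hh Hb. unfold in_rect; simpl.
  repeat (destruct Hb as [<- | Hb]; [simpl; lra |]). destruct Hb.
Qed.

Lemma rg_edge_side_cells (n : nat) (r h : R) (X : config) (i j : nat) (b b' : rect) :
  0 < h -> 0 <= r -> 98 * (h * h) <= r * r ->
  In b (side_cells h) -> In b' (side_cells h) ->
  (forall x, in_rect b x -> in_rect b' x -> False) ->
  (i < n)%nat -> in_rect b (X i) -> (j < n)%nat -> in_rect b' (X j) ->
  rg_edge n r X i j.
Proof.
  intros Hh Hr Hhr Hb Hb' Hdisj Hi HXi Hj HXj.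
  split; [exact Hi | split; [exact Hj | split]].
  - intros <-. exact (Hdisj _ HXi HXj).
  - apply dist_le_in_square with h; [exact Hr | exact Hhr | |].
    + exact (side_cells_in_square h b _ Hh Hb HXi).
    + exact (side_cells_in_square h b' _ Hh Hb' HXj).
Qed.

Lemma plane_side_cell_empty (n : nat) (r h : R) (X : config) :
  0 < h -> 0 <= r -> 98 * (h * h) <= r * r ->
  rg_plane n r X ->
  exists b, In b (side_cells h) /\ forall i, (i < n)%nat -> ~ in_rect b (X i).
Proof.
  intros Hh Hr Hhr Hplane. apply NNPP. intro Hfull.
  assert (Hpoint : forall b, In b (side_cells h) ->
            exists i, (i < n)%nat /\ in_rect b (X i)).
  { intros b Hb. apply NNPP. intro Hno. apply Hfull. exists b. split; [exact Hb |].
    intros i Hi HXi. apply Hno. exists i. auto. }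
  destruct (Hpoint (west_cell h)) as [i [Hi HXi]]; [simpl; tauto |].
  destruct (Hpoint (east_cell h)) as [j [Hj HXj]]; [simpl; tauto |].
  destruct (Hpoint (south_cell h)) as [k [Hk HXk]]; [simpl; tauto |].
  destruct (Hpoint (north_cell h)) as [l [Hl HXl]]; [simpl; tauto |].
  apply (Hplane i j k l).
  - apply (rg_edge_side_cells n r h X i j (west_cell h) (east_cell h)); simpl; auto.
    unfold in_rect; simpl; intros; lra.
  - apply (rg_edge_side_cells n r h X k l (south_cell h) (north_cell h)); simpl; auto.
    unfold in_rect; simpl; intros; lra.
  - unfold in_rect in *; simpl in *. intros [[<- <-] | [<- <-]]; lra.
  - exact (segs_cross_side_cells h _ _ _ _ Hh HXi HXj HXk HXl).
Qed.

Lemma outer_measure_lt_subset (n : nat) (E F : config -> Prop) (eps : R) :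
  (forall X, E X -> F X) -> outer_measure_lt n F eps -> outer_measure_lt n E eps.
Proof.
  intros HEF [lo [hi [l [Hok [Hcov Hsum]]]]].
  exists lo, hi, l. split; [exact Hok | split; [| exact Hsum]].
  intros X HX. exact (Hcov X (HEF X HX)).
Qed.

Lemma outer_measure_lt_plane_event (n : nat) (r h eps : R) :
  (1 <= n)%nat -> 0 < h -> 7 * h <= 1 -> 0 <= r -> 98 * (h * h) <= r * r ->
  4 * (1 - h * h) ^ n < eps ->
  outer_measure_lt n (plane_event n r) eps.
Proof.
  intros Hn Hh H7h Hr Hhr Heps.
  apply outer_measure_lt_subset with
    (fun X => in_unit_square n X /\
              exists b, In b (side_cells h) /\ forall i, (i < n)%nat -> ~ in_rect b (X i)).
  - intros X [HX Hplane]. split; [exact HX |].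
    exact (plane_side_cell_empty n r h X Hh Hr Hhr Hplane).
  - apply outer_measure_lt_some_rect_empty; [exact Hn | |].
    + intros b Hb. unfold rect_in_unit_square.
      repeat (destruct Hb as [<- | Hb]; [simpl; lra |]). destruct Hb.
    + unfold side_cells, Rsum_list; cbn [map fold_right].
      unfold west_cell, east_cell, south_cell, north_cell. rewrite !rect_area_square. lra.
Qed.

Lemma pow_one_minus_le_exp (x : R) (n : nat) :
  0 <= x <= 1 -> (1 - x) ^ n <= exp (- (INR n * x)).
Proof.
  intros Hx.
  replace (exp (- (INR n * x))) with (exp (- x) ^ n).
  - apply pow_incr. pose proof (exp_ineq1_le (- x)). lra.
  - rewrite <- Rpower_pow by apply exp_pos. unfold Rpower. rewrite ln_exp. f_equal; ring.
Qed.

Lemma four_pow_one_minus_lt (x eps : R) (n : nat) :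
  0 < eps -> 0 <= x <= 1 -> ln (4 / eps) < INR n * x -> 4 * (1 - x) ^ n < eps.
Proof.
  intros Heps Hx Hn.
  assert (Hexp : exp (- (INR n * x)) < eps / 4).
  { replace (eps / 4) with (exp (- ln (4 / eps))).
    - apply exp_increasing. lra.
    - rewrite exp_Ropp, exp_ln by (apply Rdiv_lt_0_compat; lra). field. lra. }
  pose proof (pow_one_minus_le_exp x n Hx). lra.
Qed.

Lemma cell_scale_large (c K rn : R) (n : nat) :
  c >= 36 -> 0 < K -> exp (3 * K) < INR n -> 100 * K < INR n ->
  rn >= sqrt (c * ln (INR n) / INR n) ->
  K < INR n * ((Rmin rn 1 / 10) * (Rmin rn 1 / 10)).
Proof.
  intros Hc HK Hexp H100 Hrn.
  assert (Hn : 0 < INR n) by lra.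
  assert (HlnK : 3 * K < ln (INR n)).
  { rewrite <- (ln_exp (3 * K)). apply ln_increasing; [apply exp_pos | exact Hexp]. }
  set (y := c * ln (INR n) / INR n) in Hrn |- *.
  assert (Hy : 0 < y) by (unfold y; apply Rdiv_lt_0_compat; nra).
  assert (Hry : y <= rn * rn).
  { pose proof (sqrt_lt_R0 y Hy). rewrite <- (sqrt_sqrt y) by lra. nra. }
  assert (Hny : INR n * y = c * ln (INR n)) by (unfold y; field; lra).
  destruct (Rle_dec rn 1) as [Hr1 | Hr1].
  - rewrite Rmin_left by exact Hr1.
    assert (INR n * (rn * rn) >= c * ln (INR n)) by nra.
    nra.
  - rewrite Rmin_right by lra. nra.
Qed.

Theorem theorem3 (c : R) (r : nat -> R) :
  c >= 36 ->
  (exists N0 : nat, forall n : nat, (n >= N0)%nat ->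
      r n >= sqrt (c * ln (INR n) / INR n)) ->
  forall eps : R, eps > 0 ->
    exists N : nat, forall n : nat, (n >= N)%nat ->
      outer_measure_lt n (plane_event n (r n)) eps.
Proof.
  intros Hc [N0 HN0] eps Heps.
  set (K := Rabs (ln (4 / eps)) + 1).
  assert (HK : ln (4 / eps) < K /\ 0 < K)
    by (pose proof (Rle_abs (ln (4 / eps))); pose proof (Rabs_pos (ln (4 / eps))); unfold K; lra).
  destruct (INR_unbounded (exp (3 * K))) as [N1 HN1].
  destruct (INR_unbounded (100 * K)) as [N2 HN2].
  exists (Nat.max N0 (Nat.max N1 N2)). intros n Hn.
  assert (HnN1 : INR N1 <= INR n) by (apply le_INR; lia).
  assert (HnN2 : INR N2 <= INR n) by (apply le_INR; lia).
  pose proof (HN0 n ltac:(lia)) as Hrn.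
  assert (Hr : 0 <= r n) by (pose proof (sqrt_pos (c * ln (INR n) / INR n)); lra).
  pose proof (cell_scale_large c K (r n) n Hc (proj2 HK) ltac:(lra) ltac:(lra) Hrn) as Hscale.
  set (h := Rmin (r n) 1 / 10) in Hscale |- *.
  assert (Hh : 0 < h <= 1 / 10 /\ h <= r n / 10).
  { pose proof (Rmin_l (r n) 1); pose proof (Rmin_r (r n) 1).
    assert (Hh0 : 0 <= h) by (unfold h; apply Rmult_le_pos; [apply Rmin_glb | ]; lra).
    split; [split |]; [| unfold h; lra | unfold h; lra].
    destruct Hh0 as [Hh0 | Hh0]; [exact Hh0 |].
    rewrite <- Hh0 in Hscale. lra. }
  apply (outer_measure_lt_plane_event n (r n) h eps); [| lra | lra | exact Hr | nra |].
  - destruct n as [|m]; [simpl in HnN2; lra | lia].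
  - apply four_pow_one_minus_lt; [lra | nra | lra].
Qed.
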